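(* For every level $t \in \mathcal{L}$ there exists a unique finite set $\{u_1, \ldots, u_n\} \subseteq \mathcal{L}_s$ of pairwise incomparable sublevels (i.e. with $\max(u_1,\ldots,u_n) \in \mathcal{L}_r$) such that $t =_{\mathcal{L}} \max(u_1, \ldots, u_n)$.
   Context: $\operatorname{imax}\colon \mathbb{N}\times\mathbb{N}\to\mathbb{N}$ is defined by $\operatorname{imax}(i,0)=0$ and $\operatorname{imax}(i,j+1)=\max(i,j+1)$. Levels are terms of the grammar $t ::= x \mid 0 \mid s(t) \mid \max(t,t) \mid \operatorname{imax}(t,t)$, with $x$ in a countable set of variables $\mathcal{X}$; $\mathcal{L}$ is the set of levels. A valuation is $\sigma\colon\mathcal{X}\to\mathbb{N}$; values are $[0]_\sigma=0$, $[x]_\sigma=\sigma(x)$, $[s(t)]_\sigma=[t]_\sigma+1$, $[\max(t_1,t_2)]_\sigma=\max([t_1]_\sigma,[t_2]_\sigma)$, $[\operatorname{imax}(t_1,t_2)]_\sigma=\operatorname{imax}([t_1]_\sigma,[t_2]_\sigma)$. Sublevels: for finite $E\subseteq\mathcal{X}$, $x\in\mathcal{X}$, $S\in\mathbb{N}$, $[A(E,x,S)]_\sigma$ is $0$ if some $y\in E$ has $\sigma(y)=0$ and $\sigma(x)+S$ otherwise; $[B(E,S)]_\sigma$ is $0$ if some $y\in E$ has $\sigma(y)=0$ and $S$ otherwise. $\mathcal{L}_s$ is the set of sublevels $A(E,x,S)$ with $x\in E$ and $B(E,S)$ with $S>0$. $\max$ of a finite family is evaluated pointwise (empty max has value $0$).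 $t_1\leqslant_{\mathcal{L}} t_2$ (resp. $=_{\mathcal{L}}$) means $[t_1]_\sigma\le[t_2]_\sigma$ (resp. $=$) for every valuation $\sigma$. Sublevels $u,v$ are incomparable if neither $u\leqslant_{\mathcal{L}} v$ nor $v\leqslant_{\mathcal{L}} u$. $\mathcal{L}_r$ (minimal representations) is the set of formal expressions $\max(u_1,\ldots,u_n)$ with $\{u_1,\ldots,u_n\}$ a finite set of pairwise incomparable elements of $\mathcal{L}_s$. *)

From mathcomp Require Import all_boot finmap.
From Stdlib Require List.
Set Implicit Arguments. Unset Strict Implicit. Unset Printing Implicit Defensive.
Local Open Scope fset_scope.

Definition imax (i j : nat) : nat := if j is 0 then 0 else maxn i j.

Inductive level : Type :=
| LVar of nat
| LZero
| LSucc of level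
| LMax of level & level
| LIMax of level & level.

Definition valuation := nat -> nat.

Fixpoint level_eval (t : level) (sg : valuation) : nat :=
  match t with
  | LVar x => sg x
  | LZero => 0
  | LSucc t1 => (level_eval t1 sg).+1
  | LMax t1 t2 => maxn (level_eval t1 sg) (level_eval t2 sg)
  | LIMax t1 t2 => imax (level_eval t1 sg) (level_eval t2 sg)
  end.

(* Sublevels A(E,x,S) and B(E,S), E a finite set of variables. *)
Inductive sublevel : Type :=
| SubA of {fset nat} & nat & nat
| SubB of {fset nat} & nat.

Definition some_zero (E : {fset nat}) (sg : valuation) : bool :=
  [exists y : E, sg (val y) == 0].

Definition sub_eval (u : sublevel) (sg : valuation) : nat :=
  match u with
  | SubA E x k => if some_zero E sg then 0 else (sg x + k)%N
  | SubB E k => if some_zero E sg then 0 else k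
  end.

Definition in_Ls (u : sublevel) : Prop :=
  match u with
  | SubA E x _ => x \in E
  | SubB _ k => 0 < k
  end.

Definition sub_le (u v : sublevel) : Prop :=
  forall sg : valuation, sub_eval u sg <= sub_eval v sg.

Definition incomparable (u v : sublevel) : Prop :=
  ~ sub_le u v /\ ~ sub_le v u.

Definition max_eval (us : seq sublevel) (sg : valuation) : nat :=
  foldr (fun u m => maxn (sub_eval u sg) m) 0 us.

(* the list us (read as a finite set) is a set of pairwise incomparable
   elements of L_s whose max is L-equal to t *)
Definition min_rep_of (t : level) (us : seq sublevel) : Prop :=
  (forall u, List.In u us -> in_Ls u) /\
  (forall u v, List.In u us -> List.In v us -> u <> v -> incomparable u v) /\
  (forall sg : valuation, level_eval t sg = max_eval us sg).

(* A level is first unfolded into a finite max of sublevels, by induction on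
   its syntax: [s(t)] shifts every sublevel and adds [B(fset0, 1)], and
   [imax(t1, t2)] guards every sublevel of [t1] by the variables of each
   sublevel of [t2]. Dropping dominated sublevels then makes the family
   pairwise incomparable. Uniqueness comes from join-primality: if a sublevel
   [u] lies below a finite max, then one evaluation, positive exactly on the
   guard of [u] and large at its variable, forces a single member of the
   family to dominate [u] syntactically. Two pairwise incomparable
   representations of the same level therefore have the same members. *)
From mathcomp Require Import all_boot finmap zify.
From Stdlib Require List.
From Stdlib Require Import Classical.
Set Implicit Arguments. Unset Strict Implicit. Unset Printing Implicit Defensive.
Local Open Scope fset_scope.

Lemma some_zeroP E sg : reflect (exists2 y, y \in E & sg y = 0) (some_zero E sg).
Proof.
apply: (iffP existsP) => [[[y yE] /eqP /= y0] | [y yE y0]]; first by exists y.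
by exists [` yE]; apply/eqP.
Qed.

Lemma some_zero0 sg : some_zero fset0 sg = false.
Proof. by apply/some_zeroP => -[y]; rewrite in_fset0. Qed.

Lemma some_zero1 x sg : some_zero [fset x] sg = (sg x == 0).
Proof.
apply/some_zeroP/eqP => [[y] | x0]; last by exists x; rewrite ?fset11.
by rewrite in_fset1 => /eqP ->.
Qed.

Lemma some_zero_fsetU E F sg :
  some_zero (E `|` F) sg = some_zero E sg || some_zero F sg.
Proof.
apply/some_zeroP/orP => [[y /fsetUP [yE | yF] y0] | [] /some_zeroP [y yE y0]].
- by left; apply/some_zeroP; exists y.
- by right; apply/some_zeroP; exists y.
- by exists y; rewrite // in_fsetU yE.
- by exists y; rewrite // in_fsetU yE orbT.
Qed.

Lemma some_zero_subset E F sg :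
  {subset E <= F} -> some_zero E sg -> some_zero F sg.
Proof. by move=> EF /some_zeroP [y /EF yF y0]; apply/some_zeroP; exists y. Qed.

Lemma In_cat (T : Type) (x : T) (s1 s2 : seq T) :
  List.In x (s1 ++ s2) <-> List.In x s1 \/ List.In x s2.
Proof. by elim: s1 => [|y s1 IH] /=; rewrite ?IH; tauto. Qed.

Lemma In_map (T1 T2 : Type) (f : T1 -> T2) (y : T2) (s : seq T1) :
  List.In y (map f s) -> exists2 x, List.In x s & y = f x.
Proof.
elim: s => [|x s IH] //= [<- | /IH [z zs ->]]; first by exists x => //; left.
by exists z => //; right.
Qed.

Definition sub_vars (u : sublevel) : {fset nat} :=
  match u with SubA E _ _ | SubB E _ => E end.

Definition sub_const (u : sublevel) : nat :=
  match u with SubA _ _ k | SubB _ k => k end.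

Definition sub_succ (u : sublevel) : sublevel :=
  match u with
  | SubA E x k => SubA E x k.+1
  | SubB E k => SubB E k.+1
  end.

Definition sub_guard (u : sublevel) (F : {fset nat}) : sublevel :=
  match u with
  | SubA E x k => SubA (E `|` F) x k
  | SubB E k => SubB (E `|` F) k
  end.

Lemma sub_eval_succ u sg : maxn 1 (sub_eval (sub_succ u) sg) = (sub_eval u sg).+1.
Proof. by case: u => [E x k | E k] /=; case: some_zero => /=; lia. Qed.

Lemma sub_eval_guard u F sg :
  sub_eval (sub_guard u F) sg = if some_zero F sg then 0 else sub_eval u sg.
Proof. by case: u => [E x k | E k] /=; rewrite some_zero_fsetU; do 2 case: some_zero. Qed.

Lemma sub_eval_gt0 v sg : 0 < sub_eval v sg -> some_zero (sub_vars v) sg = false.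
Proof. by case: v => [E x k | E k] /=; case: some_zero. Qed.

Lemma sub_eval_eq0 v sg : in_Ls v -> (sub_eval v sg == 0) = some_zero (sub_vars v) sg.
Proof.
case: v => [E x k | E k] /= vL; case: (boolP (some_zero E sg)) => //= /some_zeroP nz.
- by rewrite addn_eq0; case: eqP => // x0; case: nz; exists x.
- by case: k vL.
Qed.

Lemma max_eval_cat U V sg :
  max_eval (U ++ V) sg = maxn (max_eval U sg) (max_eval V sg).
Proof. by elim: U => [|u U IH] /=; rewrite ?IH; lia. Qed.

Lemma max_eval_ge u U sg : List.In u U -> sub_eval u sg <= max_eval U sg.
Proof. by elim: U => [|v U IH] //= [<- | /IH]; lia. Qed.

Lemma max_eval_attained U sg :
  0 < max_eval U sg -> exists2 v, List.In v U & max_eval U sg = sub_eval v sg.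
Proof.
elim: U => [|u U IH] //= max_gt0.
case: (leqP (max_eval U sg) (sub_eval u sg)) => uU; first by exists u; [left | lia].
have [|v vU vmax] := IH; first lia.
by exists v; [right | lia].
Qed.

Definition all_Ls (U : seq sublevel) : Prop := forall u, List.In u U -> in_Ls u.

Lemma all_Ls_cat U V : all_Ls U -> all_Ls V -> all_Ls (U ++ V).
Proof. by move=> UL VL u /In_cat [/UL | /VL]. Qed.

Lemma all_Ls_map (T : Type) (f : T -> sublevel) (s : seq T) :
  (forall x, List.In x s -> in_Ls (f x)) -> all_Ls (map f s).
Proof. by move=> fL y /(@In_map _ _ f) [x /fL xL ->]. Qed.

Lemma in_Ls_succ u : in_Ls u -> in_Ls (sub_succ u).
Proof. by case: u. Qed.

Lemma in_Ls_guard u F : in_Ls u -> in_Ls (sub_guard u F).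
Proof. by case: u => [E x k | E k] //= xE; rewrite in_fsetU xE. Qed.

(* [imax a b] is [0] if [b] is and [maxn a b] otherwise, and a sublevel [v]
   of [L_s] vanishes exactly when one of [sub_vars v] does. *)
Definition imax_guard (U V : seq sublevel) : seq sublevel :=
  [seq sub_guard u (sub_vars v) | u <- U, v <- V].

Lemma all_Ls_imax_guard U V : all_Ls U -> all_Ls (imax_guard U V).
Proof.
elim: U => [|u U IH] //= UL; apply: all_Ls_cat; last by apply: IH => w wU; apply: UL; right.
by apply: all_Ls_map => v _; apply/in_Ls_guard/UL; left.
Qed.

Lemma max_eval_guard_row u V sg : all_Ls V ->
  max_eval [seq sub_guard u (sub_vars v) | v <- V] sg =
  if max_eval V sg == 0 then 0 else sub_eval u sg.
Proof.
elim: V => [|v V IH] //= VL.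
rewrite sub_eval_guard IH => [|w wV]; last by apply: VL; right.
rewrite -sub_eval_eq0; last by apply: VL; left.
case: (sub_eval v sg =P 0) => [-> | v0]; case: (max_eval V sg =P 0) => [-> | V0] //=.
all: by rewrite ?max0n ?maxn0 ?maxnn; case: eqP => //; lia.
Qed.

Lemma max_eval_imax_guard U V sg : all_Ls V ->
  max_eval (imax_guard U V) sg = if max_eval V sg == 0 then 0 else max_eval U sg.
Proof.
move=> VL; elim: U => [|u U IH] /=; first by case: eqP.
by rewrite max_eval_cat IH max_eval_guard_row //; case: eqP.
Qed.

(* [s t = max 1 (t + 1)]: the sublevel [B(fset0, 1)] is needed because
   [sub_succ] keeps a vanishing sublevel at [0]. *)
Fixpoint decompose (t : level) : seq sublevel :=
  match t with
  | LVar x => [:: SubA [fset x] x 0]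
  | LZero => [::]
  | LSucc t => SubB fset0 1 :: map sub_succ (decompose t)
  | LMax t1 t2 => decompose t1 ++ decompose t2
  | LIMax t1 t2 => imax_guard (decompose t1) (decompose t2) ++ decompose t2
  end.

Lemma all_Ls_decompose t : all_Ls (decompose t).
Proof.
elim: t => [x | | t IH | t1 IH1 t2 IH2 | t1 IH1 t2 IH2] /=.
- by move=> _ [<- | []]; rewrite /= fset11.
- by [].
- move=> u [<- // | ]; apply: all_Ls_map => v /IH; exact: in_Ls_succ.
- exact: all_Ls_cat.
- by apply: all_Ls_cat => //; apply: all_Ls_imax_guard.
Qed.

Lemma max_eval_succ U sg :
  maxn 1 (max_eval (map sub_succ U) sg) = (max_eval U sg).+1.
Proof. by elim: U => [|u U IH] //=; have := sub_eval_succ u sg; lia. Qed.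

Lemma level_eval_decompose t sg : level_eval t sg = max_eval (decompose t) sg.
Proof.
elim: t => [x | | t IH | t1 IH1 t2 IH2 | t1 IH1 t2 IH2] //=.
- by rewrite some_zero1; case: eqP => [-> | ] /=; lia.
- by rewrite some_zero0 IH -max_eval_succ.
- by rewrite max_eval_cat IH1 IH2.
- rewrite max_eval_cat max_eval_imax_guard; last exact: all_Ls_decompose.
  rewrite IH1 IH2 /imax.
  by case: (max_eval (decompose t2) sg) => //= n; case: eqP; lia.
Qed.

Definition pairwise_incomparable (W : seq sublevel) : Prop :=
  forall u v, List.In u W -> List.In v W -> u <> v -> incomparable u v.

Lemma drop_dominated u W : exists2 W',
  forall w, List.In w W' -> List.In w W /\ ~ sub_le w u &
  forall sg, maxn (sub_eval u sg) (max_eval W' sg) =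
             maxn (sub_eval u sg) (max_eval W sg).
Proof.
elim: W => [|w W [W' W'W W'max]]; first by exists [::].
have [wu | wNu] := classic (sub_le w u).
- exists W' => [v /W'W [vW vNu] | sg /=]; first by split => //; right.
  by have := W'max sg; have := wu sg; lia.
- exists (w :: W') => [v [<- | /W'W [vW vNu]] | sg /=]; first by split => //; left.
    by split => //; right.
  by have := W'max sg; lia.
Qed.

Lemma pairwise_incomparable_reduction U : exists W,
  [/\ forall u, List.In u W -> List.In u U, pairwise_incomparable W &
      forall sg, max_eval W sg = max_eval U sg].
Proof.
elim: U => [|u U [W [WU Winc Wmax]]]; first by exists [::].
have [[w wW uw] | uNW] := classic (exists2 w, List.In w W & sub_le u w).
  exists W; split => [v /WU vU | // | sg /=]; first by right.
  by rewrite -Wmax; have := max_eval_ge sg wW; have := uw sg; lia.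
have [W' W'W W'max] := drop_dominated u W.
exists (u :: W'); split => [v [<- | /W'W [/WU vU _]] | | sg /=]; [by left | by right | |].
- move=> a b [<- | /W'W [aW aNu]] [<- | /W'W [bW bNu]] ab //.
  + by split => // ub; apply: uNW; exists b.
  + by split => // ua; apply: uNW; exists a.
  + exact: Winc.
- by rewrite W'max Wmax.
Qed.

(* In the [B]/[A] case, [A(E', x', k')] is either [0] or at least [k'.+1],
   since [x' \in E']. *)
Definition struct_le (u v : sublevel) : Prop :=
  match u, v with
  | SubA E x k, SubA E' x' k' => [/\ {subset E' <= E}, x = x' & k <= k']
  | SubA _ _ _, SubB _ _ => False
  | SubB E k, SubA E' _ k' => {subset E' <= E} /\ k <= k'.+1
  | SubB E k, SubB E' k' => {subset E' <= E} /\ k <= k'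
  end.

Lemma struct_le_vars u v : struct_le u v -> {subset sub_vars v <= sub_vars u}.
Proof. by case: u v => [E x k | E k] [E' x' k' | E' k'] //= []. Qed.

Lemma struct_le_sound u v : in_Ls v -> struct_le u v -> sub_le u v.
Proof.
move=> vL uv sg; case: (boolP (some_zero (sub_vars u) sg)) => [uz | /negbTE unz].
  by case: u {uv} uz => [E x k | E k] /= ->.
have vnz : some_zero (sub_vars v) sg = false.
  by apply: contraFF unz; apply/some_zero_subset/struct_le_vars.
case: u v vL uv unz vnz => [E x k | E k] [E' x' k' | E' k'] //= vL.
- by case=> _ <- kk' -> ->; rewrite leq_add2l.
- case=> _ kk' -> vnz; rewrite vnz.
  suff : sg x' != 0 by lia.
  by apply: contraFN vnz => /eqP x0; apply/some_zeroP; exists x'.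
- by case=> _ kk' -> ->.
Qed.

Lemma struct_le_anti u v : struct_le u v -> struct_le v u -> u = v.
Proof.
have fset_anti (E E' : {fset nat}) : {subset E <= E'} -> {subset E' <= E} -> E = E'.
  by move=> EE' E'E; apply/fsetP => y; apply/idP/idP; [exact: EE' | exact: E'E].
case: u v => [E x k | E k] [E' x' k' | E' k'] //=.
- by case=> E'E <- kk' [EE' _ k'k]; rewrite (fset_anti _ _ EE' E'E); congr SubA; lia.
- by case=> E'E kk' [EE' k'k]; rewrite (fset_anti _ _ EE' E'E); congr SubB; lia.
Qed.

Definition probe (E : {fset nat}) (x N : nat) : valuation :=
  fun y => if y \in E then (if y == x then N else 1) else 0.

Lemma probe_some_zero E x N : 0 < N -> some_zero E (probe E x N) = false.
Proof. by move=> N0; apply/some_zeroP => -[y yE]; rewrite /probe yE; case: eqP; lia. Qed.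

Lemma probe_vars v E x N :
  0 < sub_eval v (probe E x N) -> {subset sub_vars v <= E}.
Proof.
move/sub_eval_gt0 => vnz y yv; apply: contraFT vnz => yNE.
by apply/some_zeroP; exists y; rewrite // /probe (negbTE yNE).
Qed.

Lemma sub_const_bound V : exists N, forall v, List.In v V -> sub_const v < N.
Proof.
elim: V => [|v V [N VN]]; first by exists 0.
by exists (maxn (sub_const v).+1 N) => w [<- | /VN]; lia.
Qed.

Lemma sublevel_join_prime u V : in_Ls u ->
  (forall sg, sub_eval u sg <= max_eval V sg) -> exists2 v, List.In v V & struct_le u v.
Proof.
move=> uL uV; have [N VN] := sub_const_bound V.
(* [sg] is positive exactly on the guard of [u] and, for [u = A(E, x, k)],
   exceeds at [x] every constant of [V]. *)
pose sg := probe (sub_vars u) (if u is SubA _ x _ then x else 0)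
                 (if u is SubA _ _ _ then N.+1 else 1).
have u_pos : 0 < sub_eval u sg.
  by case: u uL {uV} @sg => [E x k | E k] /= uL; rewrite probe_some_zero // /probe ?uL ?eqxx.
have [v vV vmax] := max_eval_attained (leq_trans u_pos (uV sg)).
have uv := uV sg; rewrite vmax in uv; have v_pos := leq_trans u_pos uv.
exists v => //; have := VN v vV; have := probe_vars v_pos; have := sub_eval_gt0 v_pos.
clear vmax vV VN v_pos; case: u uL {uV} @sg u_pos uv => [E x k | E k] /= uL.
all: rewrite probe_some_zero //.
all: case: v => [E' x' k' | E' k'] /= _ uv vnz E'E k'N; rewrite vnz /probe ?uL ?eqxx in uv.
- case: (x' =P x) uv => [-> | _]; first by rewrite uL => uv; split => //; lia.
  by case: ifP => _ uv; lia.
- lia.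
- by split => //; move: uv; rewrite if_same; case: ifP => _; lia.
- by split => //; lia.
Qed.

Lemma min_rep_subset U V : all_Ls U -> all_Ls V -> pairwise_incomparable U ->
  (forall sg, max_eval U sg = max_eval V sg) ->
  forall u, List.In u U -> List.In u V.
Proof.
move=> UL VL Uinc UV u uU.
have [v vV uv] : exists2 v, List.In v V & struct_le u v.
  by apply: sublevel_join_prime; [exact: UL | move=> sg; rewrite -UV; exact: max_eval_ge].
have [u' u'U vu'] : exists2 u', List.In u' U & struct_le v u'.
  by apply: sublevel_join_prime; [exact: VL | move=> sg; rewrite UV; exact: max_eval_ge].
have [uu' | uu'] := classic (u = u'); first by subst u'; rewrite (struct_le_anti uv vu').
have [uNu' _] := Uinc _ _ uU u'U uu'; case: uNu' => sg.
exact: leq_trans (struct_le_sound (VL _ vV) uv sg) (struct_le_sound (UL _ u'U) vu' sg).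
Qed.

Theorem theorem35 (t : level) :
  exists us : seq sublevel,
    min_rep_of t us /\
    (forall us' : seq sublevel, min_rep_of t us' ->
       forall u, List.In u us' <-> List.In u us).
Proof.
have [W [WU Winc Wmax]] := pairwise_incomparable_reduction (decompose t).
have WL : all_Ls W by move=> u /WU; apply: all_Ls_decompose.
have tW sg : level_eval t sg = max_eval W sg by rewrite Wmax level_eval_decompose.
exists W; split=> [// | us [usL [usinc tus]] u].
by split; apply: min_rep_subset => // sg; rewrite -tus tW.
Qed.
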